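(* Every flat cone sphere $\Sigma$ has an embedded spanning tree, i.e. a tree whose vertices are exactly the cone points of $\Sigma$, whose edges are straight line segments (geodesics in the flat metric) between cone points, and no two of whose edges cross.
   Context: A flat cone sphere is a metric on the $2$-sphere, locally isometric to the Euclidean plane except at finitely many cone points, each having a neighborhood isometric to a neighborhood of the apex of a Euclidean cone of angle $2\pi-\theta$ with $\theta\in(0,2\pi)$. *)

From Stdlib Require Import Reals Lra List.
Open Scope R_scope.

Record MetricSpace := {
  carrier :> Type;
  dist : carrier -> carrier -> R;
  dist_sep : forall x y, dist x y = 0 <-> x = y;
  dist_sym : forall x y, dist x y = dist y x;
  dist_tri : forall x y z, dist x z <= dist x y + dist y z
}.
Arguments dist {m} _ _.

Definition mcont {A B : Type} (dA : A -> A -> R) (dB : B -> B -> R) (f : A -> B) : Prop :=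
  forall x eps, 0 < eps -> exists delta, 0 < delta /\
    forall y, dA x y < delta -> dB (f x) (f y) < eps.

Definition S2 : Type :=
  { p : R * R * R | let '(a, b, c) := p in a * a + b * b + c * c = 1 }.
Definition dist3 (p q : R * R * R) : R :=
  let '(a1, b1, c1) := p in let '(a2, b2, c2) := q in
  sqrt ((a1 - a2) ^ 2 + (b1 - b2) ^ 2 + (c1 - c2) ^ 2).
Definition distS2 (p q : S2) : R := dist3 (proj1_sig p) (proj1_sig q).

Definition homeomorphic_to_S2 (X : MetricSpace) : Prop :=
  exists (f : X -> S2) (g : S2 -> X),
    (forall x, g (f x) = x) /\ (forall p, f (g p) = p) /\
    mcont (@dist X) distS2 f /\ mcont distS2 (@dist X) g.

Definition intrinsic (X : MetricSpace) : Prop :=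
  forall (x y : X) eps, 0 < eps -> exists z : X,
    dist x z <= dist x y / 2 + eps /\ dist z y <= dist x y / 2 + eps.

Definition dist2 (p q : R * R) : R :=
  sqrt ((fst p - fst q) ^ 2 + (snd p - snd q) ^ 2).

(** Euclidean cone of total angle [alpha] in polar coordinates (r, t),
    r >= 0, t taken modulo alpha.  [angsep] is the angular separation
    in [0, alpha/2]. *)
Definition angsep (alpha t1 t2 : R) : R :=
  let u := (t1 - t2) - alpha * IZR (Int_part ((t1 - t2) / alpha)) in
  Rmin u (alpha - u).
Definition cone_dist (alpha : R) (p q : R * R) : R :=
  let phi := angsep alpha (snd p) (snd q) in
  if Rlt_dec phi PI
  then sqrt (fst p ^ 2 + fst q ^ 2 - 2 * fst p * fst q * cos phi)
  else fst p + fst q.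

Definition locally_euclidean_at (X : MetricSpace) (p : X) : Prop :=
  exists eps (f : X -> R * R), 0 < eps /\
    (forall x y, dist p x < eps -> dist p y < eps -> dist2 (f x) (f y) = dist x y) /\
    (forall q, dist2 (f p) q < eps -> exists x, dist p x < eps /\ f x = q).

Definition cone_point_of_angle (X : MetricSpace) (p : X) (alpha : R) : Prop :=
  exists eps (f : X -> R * R), 0 < eps /\
    fst (f p) = 0 /\
    (forall x, dist p x < eps -> 0 <= fst (f x)) /\
    (forall x y, dist p x < eps -> dist p y < eps ->
       cone_dist alpha (f x) (f y) = dist x y) /\
    (forall r t, 0 <= r < eps ->
       exists x, dist p x < eps /\ cone_dist alpha (f x) (r, t) = 0).

Definition flat_cone_sphere (X : MetricSpace) (C : list X) : Prop :=
  homeomorphic_to_S2 X /\ intrinsic X /\ NoDup C /\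
  (forall p : X, ~ In p C -> locally_euclidean_at X p) /\
  (forall p : X, In p C ->
     exists theta, 0 < theta < 2 * PI /\ cone_point_of_angle X p (2 * PI - theta)).

(** Parametrized segments [spath : [0, slen] -> X]. *)
Record Seg (X : Type) := mkSeg { slen : R; spath : R -> X }.
Arguments slen {X} _.
Arguments spath {X} _ _.

(** A straight line segment between cone points: an embedded, unit-speed,
    locally distance-realising (i.e. locally straight) path joining two
    cone points and avoiding cone points in its interior. *)
Definition straight_segment (X : MetricSpace) (C : list X) (s : Seg X) : Prop :=
  0 < slen s /\
  In (spath s 0) C /\ In (spath s (slen s)) C /\
  (forall t, 0 < t < slen s -> ~ In (spath s t) C) /\
  (forall t1 t2, 0 <= t1 <= slen s -> 0 <= t2 <= slen s ->
     spath s t1 = spath s t2 -> t1 = t2) /\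
  (forall t, 0 <= t <= slen s -> exists delta, 0 < delta /\
     forall a b, 0 <= a <= slen s -> 0 <= b <= slen s ->
       Rabs (a - t) < delta -> Rabs (b - t) < delta ->
       dist (spath s a) (spath s b) = Rabs (a - b)).

(** Trails in the (multi)graph whose edges are the segments of E:
    [trail E u v es] : the edge indices es form a walk from u to v. *)
Fixpoint trail {X : Type} (E : list (Seg X)) (u v : X) (es : list nat) : Prop :=
  match es with
  | nil => u = v
  | i :: es' => exists s w, nth_error E i = Some s /\
      ((spath s 0 = u /\ spath s (slen s) = w) \/
       (spath s 0 = w /\ spath s (slen s) = u)) /\
      trail E w v es'
  end.

Definition embedded_spanning_tree (X : MetricSpace) (C : list X) (E : list (Seg X)) : Prop :=
  (forall s, In s E -> straight_segment X C s) /\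
  (forall u v, In u C -> In v C -> exists es, trail E u v es) /\
  (forall (u : X) es, es <> nil -> NoDup es -> ~ trail E u u es) /\
  (forall i j si sj, i <> j -> nth_error E i = Some si -> nth_error E j = Some sj ->
     forall a b, 0 < a < slen si -> 0 < b < slen sj -> spath si a <> spath sj b).

(* Fix a cone point [r] and join it to every other cone point by a shortest path.  Such
   paths exist because the sphere is compact and its metric is intrinsic: compactness turns
   approximate midpoints into midpoints, and iterated midpoints accumulate along a geodesic.
   A geodesic cannot pass through a cone point, whose angle is less than [2 PI], and geodesics
   do not branch at flat points.  So if two of the chosen geodesics met at interior points,
   these would lie at the same distance from [r], the geodesics would agree from [r] up to
   there and beyond, and one of them would run through the end point of the other.  Hence the
   star of these geodesics is an embedded spanning tree. *)

From Stdlib Require Import Reals Lra Lia List ZArith ClassicalEpsilon Classical.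
From Stdlib Require Rtopology.
Open Scope R_scope.

Lemma dist_refl (X : MetricSpace) (x : X) : dist x x = 0.
Proof. now apply dist_sep. Qed.

Lemma dist_nonneg (X : MetricSpace) (x y : X) : 0 <= dist x y.
Proof.
  pose proof (dist_tri X x y x) as H.
  rewrite dist_refl, (dist_sym X y x) in H; lra.
Qed.

Lemma dist_pos (X : MetricSpace) (x y : X) : x <> y -> 0 < dist x y.
Proof.
  intros Hxy. destruct (Rle_lt_or_eq_dec _ _ (dist_nonneg X x y)) as [|E]; [assumption|].
  exfalso. apply Hxy, dist_sep. now symmetry.
Qed.

Definition cluster_point {A : Type} (d : A -> A -> R) (u : nat -> A) (l : A) : Prop :=
  forall eps, 0 < eps -> forall N, exists n, (N <= n)%nat /\ d (u n) l < eps.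

Lemma inv_succ_eventually_lt (e : R) :
  0 < e -> exists N, forall n, (N <= n)%nat -> / (INR n + 1) < e.
Proof.
  intros He. destruct (archimed_cor1 e He) as [N [HN HN0]]. exists N. intros n Hn.
  apply le_INR in Hn. apply lt_INR in HN0. simpl in HN0.
  eapply Rle_lt_trans; [|exact HN]. apply Rinv_le_contravar; lra.
Qed.

Lemma strictly_increasing_ge_id (phi : nat -> nat) :
  (forall k, (phi k < phi (S k))%nat) -> forall k, (k <= phi k)%nat.
Proof. intros H k. induction k as [|k IH]; [lia|]. specialize (H k). lia. Qed.

Lemma interval_seq_cluster_point (u : nat -> R) (a b : R) :
  (forall n, a <= u n <= b) -> exists l, cluster_point Rdist u l.
Proof.
  intros H.
  destruct (Rtopology.Bolzano_Weierstrass u _ (Rtopology.compact_P3 a b) H) as [l Hl].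
  exists l. intros eps He N.
  destruct (Hl (Rtopology.disc l (mkposreal eps He)) N) as [n Hn].
  - exists (mkposreal eps He). now intros y Hy.
  - exists n. exact Hn.
Qed.

Lemma cluster_point_subseq {A : Type} (d : A -> A -> R) (u : nat -> A) (l : A) :
  cluster_point d u l ->
  exists phi : nat -> nat, (forall k, (phi k < phi (S k))%nat) /\
    forall k, d (u (phi k)) l < / (INR k + 1).
Proof.
  intros H.
  assert (Hsel : forall Nk : nat * nat, exists n,
             (fst Nk <= n)%nat /\ d (u n) l < / (INR (snd Nk) + 1)).
  { intros [N k]. apply H, Rinv_0_lt_compat. simpl. pose proof (pos_INR k). lra. }
  destruct (choice _ Hsel) as [sel Hs].
  exists (fix phi k := match k with
                       | O => sel (O, O)
                       | S k' => sel (S (phi k'), S k')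
                       end).
  split.
  - intros k. lazymatch goal with |- (_ < sel ?x)%nat => destruct (Hs x) as [Hk _] end.
    simpl in Hk. lia.
  - intros [|k]; apply Hs.
Qed.

Lemma unit_interval_seq3_cluster_point (a b c : nat -> R) :
  (forall n, -1 <= a n <= 1) -> (forall n, -1 <= b n <= 1) -> (forall n, -1 <= c n <= 1) ->
  exists la lb lc, forall eps, 0 < eps -> forall N, exists n, (N <= n)%nat /\
    Rdist (a n) la < eps /\ Rdist (b n) lb < eps /\ Rdist (c n) lc < eps.
Proof.
  intros Ha Hb Hc.
  destruct (interval_seq_cluster_point a _ _ Ha) as [la Hla].
  destruct (cluster_point_subseq _ _ _ Hla) as [phi [Hphi Hphi_a]].
  destruct (interval_seq_cluster_point (fun k => b (phi k)) (-1) 1) as [lb Hlb];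
    [intros; apply Hb|].
  destruct (cluster_point_subseq _ _ _ Hlb) as [psi [Hpsi Hpsi_b]].
  destruct (interval_seq_cluster_point (fun k => c (phi (psi k))) (-1) 1) as [lc Hlc];
    [intros; apply Hc|].
  exists la, lb, lc. intros eps He N.
  destruct (inv_succ_eventually_lt eps He) as [K HK].
  destruct (Hlc eps He (max N K)) as [k [Hk Hk_c]].
  pose proof (strictly_increasing_ge_id _ Hphi (psi k)).
  pose proof (strictly_increasing_ge_id _ Hpsi k).
  exists (phi (psi k)). repeat split; [lia| | |exact Hk_c].
  - eapply Rlt_trans; [apply Hphi_a|]. apply HK. lia.
  - eapply Rlt_trans; [apply (Hpsi_b k)|]. apply HK. lia.
Qed.
Lemma unit_sphere_coord_bound (a b c : R) : a * a + b * b + c * c = 1 -> -1 <= a <= 1.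
Proof. intros H. assert (0 <= b * b) by nra. assert (0 <= c * c) by nra. split; nra. Qed.

Lemma sqr_diff_bound (x y e : R) :
  Rdist x y < e -> -1 <= y <= 1 -> e <= 1 -> Rabs (x * x - y * y) <= 3 * e.
Proof.
  unfold Rdist. intros Hxy Hy He.
  replace (x * x - y * y) with ((x - y) * ((x - y) + 2 * y)) by ring.
  rewrite Rabs_mult, (Rmult_comm 3 e). apply Rmult_le_compat; try apply Rabs_pos; [lra|].
  eapply Rle_trans; [apply Rabs_triang|].
  rewrite Rabs_mult, (Rabs_right 2) by lra.
  assert (Rabs y <= 1) by (apply Rabs_le; lra). lra.
Qed.

Lemma unit_sphere_closed (la lb lc : R) :
  (forall e, 0 < e -> exists a b c, a * a + b * b + c * c = 1 /\
     Rdist a la < e /\ Rdist b lb < e /\ Rdist c lc < e) ->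
  la * la + lb * lb + lc * lc = 1.
Proof.
  intros Happrox. set (s := la * la + lb * lb + lc * lc).
  destruct (Req_dec s 1) as [|Hne]; [assumption|exfalso].
  assert (Hgap : 0 < Rabs (s - 1)) by (apply Rabs_pos_lt; lra).
  set (e := Rmin 1 (Rabs (s - 1) / 18)).
  assert (He : 0 < e /\ e <= 1 /\ e <= Rabs (s - 1) / 18)
    by (unfold e; repeat split; [apply Rmin_pos; lra|apply Rmin_l|apply Rmin_r]).
  destruct (Happrox e (proj1 He)) as [a [b [c [Hs [Ha [Hb Hc]]]]]].
  rewrite R_dist_sym in Ha, Hb, Hc.
  pose proof (sqr_diff_bound la a e Ha (unit_sphere_coord_bound a b c Hs) (proj1 (proj2 He))).
  pose proof (sqr_diff_bound lb b e Hb
                (unit_sphere_coord_bound b a c ltac:(lra)) (proj1 (proj2 He))).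
  pose proof (sqr_diff_bound lc c e Hc
                (unit_sphere_coord_bound c a b ltac:(lra)) (proj1 (proj2 He))).
  assert (Rabs (s - 1) <= 9 * e); [|lra].
  replace (s - 1) with ((la * la - a * a) + (lb * lb - b * b) + (lc * lc - c * c))
    by (unfold s; lra).
  eapply Rle_trans; [apply Rabs_triang|].
  eapply Rle_trans; [apply Rplus_le_compat_r, Rabs_triang|]. lra.
Qed.

Lemma dist3_lt_of_coords (a b c a' b' c' e : R) :
  0 < e -> Rdist a a' < e / 3 -> Rdist b b' < e / 3 -> Rdist c c' < e / 3 ->
  dist3 (a, b, c) (a', b', c') < e.
Proof.
  unfold Rdist, dist3. intros He Ha Hb Hc.
  apply Rabs_def2 in Ha, Hb, Hc.
  assert ((a - a') * (a - a') < e * e / 9) by nra.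
  assert ((b - b') * (b - b') < e * e / 9) by nra.
  assert ((c - c') * (c - c') < e * e / 9) by nra.
  rewrite <- (sqrt_Rsqr e) by lra. apply sqrt_lt_1_alt. unfold Rsqr. simpl. assert (0 < e * e) by nra. split; [|lra].
  pose proof (Rle_0_sqr (a - a')). pose proof (Rle_0_sqr (b - b')).
  pose proof (Rle_0_sqr (c - c')). unfold Rsqr in *. lra.
Qed.

Section Compactness.

Variable X : MetricSpace.
Hypothesis HS2 : homeomorphic_to_S2 X.

Lemma seq_cluster_point (x : nat -> X) : exists z, cluster_point dist x z.
Proof.
  destruct HS2 as [f [g [Hgf [_ [_ Hg]]]]].
  set (P n := proj1_sig (f (x n))).
  set (a n := fst (fst (P n))). set (b n := snd (fst (P n))). set (c n := snd (P n)).
  assert (HP : forall n, a n * a n + b n * b n + c n * c n = 1).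
  { intros n. pose proof (proj2_sig (f (x n))) as H. fold (P n) in H.
    unfold a, b, c. destruct (P n) as [[? ?] ?]. exact H. }
  destruct (unit_interval_seq3_cluster_point a b c) as [la [lb [lc Hl]]].
  { intros n. exact (unit_sphere_coord_bound _ _ _ (HP n)). }
  { intros n. apply (unit_sphere_coord_bound _ (a n) (c n)). specialize (HP n). lra. }
  { intros n. apply (unit_sphere_coord_bound _ (a n) (b n)). specialize (HP n). lra. }
  assert (Hs : la * la + lb * lb + lc * lc = 1).
  { apply unit_sphere_closed. intros e He. destruct (Hl e He O) as [n [_ Hn]].
    exists (a n), (b n), (c n). split; [apply HP|exact Hn]. }
  set (s := exist _ (la, lb, lc) Hs : S2).
  exists (g s). intros eps He N.
  destruct (Hg s eps He) as [delta [Hdelta Hcont]].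
  destruct (Hl (delta / 3) ltac:(lra) N) as [n [Hn [Ha [Hb Hc]]]].
  exists n. split; [exact Hn|].
  rewrite <- (Hgf (x n)), dist_sym. apply Hcont.
  unfold distS2. simpl. fold (P n). unfold a, b, c in Ha, Hb, Hc.
  destruct (P n) as [[a' b'] c']. simpl in Ha, Hb, Hc.
  rewrite R_dist_sym in Ha, Hb, Hc. now apply dist3_lt_of_coords.
Qed.

Hypothesis Hintr : intrinsic X.

Lemma midpoint_exists (x y : X) :
  exists m, dist x m = dist x y / 2 /\ dist m y = dist x y / 2.
Proof.
  assert (Happrox : forall n : nat, exists z : X,
             dist x z <= dist x y / 2 + / (INR n + 1) /\
             dist z y <= dist x y / 2 + / (INR n + 1)).
  { intros n. apply Hintr, Rinv_0_lt_compat. pose proof (pos_INR n). lra. }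
  destruct (choice _ Happrox) as [z Hz].
  destruct (seq_cluster_point z) as [m Hm]. exists m.
  assert (Hlim : forall w, (forall n, dist w (z n) <= dist x y / 2 + / (INR n + 1)) ->
                           dist w m <= dist x y / 2).
  { intros w Hw. apply Rnot_lt_le. intros Hlt.
    set (e := dist w m - dist x y / 2).
    destruct (inv_succ_eventually_lt (e / 2) ltac:(unfold e; lra)) as [N HN].
    destruct (Hm (e / 2) ltac:(unfold e; lra) N) as [n [Hn Hzn]].
    pose proof (dist_tri X w (z n) m). specialize (Hw n). specialize (HN n Hn).
    unfold e in *. lra. }
  assert (Hxm : dist x m <= dist x y / 2) by (apply Hlim; intros n; apply Hz).
  assert (Hym : dist y m <= dist x y / 2)
    by (apply Hlim; intros n; rewrite dist_sym; apply Hz).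
  pose proof (dist_tri X x m y). rewrite (dist_sym X y m) in Hym. split; lra.
Qed.

Lemma midpoint_function_exists :
  exists mid : X -> X -> X,
    forall x y, dist x (mid x y) = dist x y / 2 /\ dist (mid x y) y = dist x y / 2.
Proof.
  destruct (choice (fun (xy : X * X) (m : X) => dist (fst xy) m = dist (fst xy) (snd xy) / 2 /\
                                                dist m (snd xy) = dist (fst xy) (snd xy) / 2))
    as [mid2 Hmid2]; [intros [x y]; now apply midpoint_exists|].
  exists (fun x y => mid2 (x, y)). intros x y. exact (Hmid2 (x, y)).
Qed.

End Compactness.

Lemma dist_diff_le (X : MetricSpace) (x y x' y' : X) :
  Rabs (dist x y - dist x' y') <= dist x x' + dist y y'.
Proof.
  pose proof (dist_tri X x x' y). pose proof (dist_tri X x' y' y).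
  pose proof (dist_tri X x' x y'). pose proof (dist_tri X x y y').
  rewrite (dist_sym X x' x), (dist_sym X y' y) in *. split_Rabs; lra.
Qed.

Lemma dist_approx_param (X : MetricSpace) (x y x' y' : X) (a b a' b' h : R) :
  dist x' x <= h -> dist y' y <= h -> dist x' y' = Rabs (a' - b') ->
  Rabs (a' - a) <= h -> Rabs (b' - b) <= h -> Rabs (dist x y - Rabs (a - b)) <= 4 * h.
Proof.
  intros Hx Hy Hxy Ha Hb. pose proof (dist_diff_le X x y x' y') as Hdiff.
  rewrite (dist_sym X x x'), (dist_sym X y y'), Hxy in Hdiff.
  clear Hxy. split_Rabs; lra.
Qed.

Definition geodesic {X : MetricSpace} (g : R -> X) (L : R) : Prop :=
  forall a b, 0 <= a <= L -> 0 <= b <= L -> dist (g a) (g b) = Rabs (a - b).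

Lemma dist_chain_le (X : MetricSpace) (Q : nat -> X) (N : nat) (h : R) :
  (forall i, (i < N)%nat -> dist (Q i) (Q (S i)) <= h) ->
  forall i j, (i <= j <= N)%nat -> dist (Q i) (Q j) <= (INR j - INR i) * h.
Proof.
  intros Hstep i j. induction j as [|j IH]; intros Hij.
  - replace i with O by lia. rewrite dist_refl. simpl. lra.
  - destruct (Nat.eq_dec i (S j)) as [->|Hne]; [rewrite dist_refl; lra|].
    pose proof (dist_tri X (Q i) (Q j) (Q (S j))).
    pose proof (IH ltac:(lia)). pose proof (Hstep j ltac:(lia)). rewrite S_INR. lra.
Qed.

Lemma dist_chain_eq (X : MetricSpace) (Q : nat -> X) (N : nat) (h : R) :
  (forall i, (i < N)%nat -> dist (Q i) (Q (S i)) <= h) ->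
  INR N * h <= dist (Q O) (Q N) ->
  forall i j, (i <= j <= N)%nat -> dist (Q i) (Q j) = (INR j - INR i) * h.
Proof.
  intros Hstep HN i j Hij. apply Rle_antisym; [now apply (dist_chain_le X Q N)|].
  pose proof (dist_chain_le X Q N h Hstep O i ltac:(lia)).
  pose proof (dist_chain_le X Q N h Hstep j N ltac:(lia)).
  pose proof (dist_tri X (Q O) (Q i) (Q N)).
  pose proof (dist_tri X (Q i) (Q j) (Q N)). simpl in *. lra.
Qed.

(* [dyadic mid p q n i] is the point at the fraction [i / 2^n] of the way from [p] to [q],
   obtained by taking [n] rounds of midpoints. *)
Fixpoint dyadic {X : Type} (mid : X -> X -> X) (p q : X) (n i : nat) : X :=
  match n with
  | O => match i with O => p | _ => q end
  | S n' =>
      if Nat.odd i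
      then mid (dyadic mid p q n' (Nat.div2 i)) (dyadic mid p q n' (S (Nat.div2 i)))
      else dyadic mid p q n' (Nat.div2 i)
  end.

Lemma dyadic_even {X : Type} mid (p q : X) n k :
  dyadic mid p q (S n) (2 * k) = dyadic mid p q n k.
Proof. cbn [dyadic]. now rewrite Nat.odd_even, Nat.div2_even. Qed.

Lemma dyadic_odd {X : Type} mid (p q : X) n k :
  dyadic mid p q (S n) (2 * k + 1) = mid (dyadic mid p q n k) (dyadic mid p q n (S k)).
Proof. cbn [dyadic]. now rewrite Nat.odd_odd, Nat.div2_odd'. Qed.

Lemma dyadic_refine {X : Type} mid (p q : X) k n i :
  dyadic mid p q (k + n) (i * 2 ^ k) = dyadic mid p q n i.
Proof.
  induction k as [|k IH]; [simpl; now rewrite Nat.mul_1_r|].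
  replace (i * 2 ^ S k)%nat with (2 * (i * 2 ^ k))%nat by (rewrite Nat.pow_succ_r'; lia).
  simpl plus. now rewrite dyadic_even.
Qed.

Lemma INR_pow2 n : INR (2 ^ n) = 2 ^ n.
Proof. rewrite pow_INR. simpl INR. now replace (1 + 1) with 2 by lra. Qed.

Lemma div_pow2_eventually_lt (D e : R) :
  0 <= D -> 0 < e -> exists N, forall n, (N <= n)%nat -> D / 2 ^ n < e.
Proof.
  intros HD He.
  destruct (inv_succ_eventually_lt (e / (D + 1))) as [N HN];
    [apply Rdiv_lt_0_compat; lra|].
  exists N. intros n Hn. specialize (HN n Hn).
  pose proof (poly n 1 Rlt_0_1) as Hpow. replace (1 + 1) with 2 in Hpow by lra.
  pose proof (pos_INR n).
  apply Rle_lt_trans with ((D + 1) * / (INR n + 1)).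
  - unfold Rdiv. apply Rmult_le_compat; try lra;
      [left; apply Rinv_0_lt_compat, pow_lt; lra|apply Rinv_le_contravar; lra].
  - apply Rmult_lt_compat_l with (r := D + 1) in HN; [|lra].
    replace ((D + 1) * (e / (D + 1))) with e in HN by (field; lra). exact HN.
Qed.

Lemma eq_0_of_le_div_pow2 (D x : R) :
  0 <= D -> (forall n, Rabs x <= D / 2 ^ n) -> x = 0.
Proof.
  intros HD H. destruct (Req_dec x 0) as [|Hx]; [assumption|exfalso].
  destruct (div_pow2_eventually_lt D (Rabs x) HD (Rabs_pos_lt x Hx)) as [N HN].
  specialize (HN N (le_n _)). specialize (H N). lra.
Qed.

Lemma dyadic_index_exists (D t : R) (n : nat) :
  0 < D -> 0 <= t <= D ->
  exists i, (i <= 2 ^ n)%nat /\ Rabs (INR i * (D / 2 ^ n) - t) <= D / 2 ^ n.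
Proof.
  intros HD Ht. assert (Hpow : 0 < 2 ^ n) by (apply pow_lt; lra).
  set (h := D / 2 ^ n). assert (Hh : 0 < h) by (unfold h; apply Rdiv_lt_0_compat; lra).
  set (x := t / h). destruct (base_Int_part x) as [Hfl1 Hfl2].
  assert (Hx : 0 <= x <= 2 ^ n).
  { unfold x, h. split; [apply Rmult_le_pos; [lra|left; now apply Rinv_0_lt_compat]|].
    replace (t / (D / 2 ^ n)) with (t / D * 2 ^ n) by (field; lra).
    rewrite <- (Rmult_1_l (2 ^ n)) at 2. apply Rmult_le_compat_r; [lra|].
    apply Rmult_le_reg_r with D; [lra|]. unfold Rdiv. rewrite Rmult_assoc, Rinv_l; lra. }
  assert (Hz : (0 <= Int_part x)%Z).
  { apply le_IZR. assert (-1 < IZR (Int_part x)) by lra. apply lt_IZR in H. apply IZR_le. lia. }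
  exists (Z.to_nat (Int_part x)).
  assert (Hi : INR (Z.to_nat (Int_part x)) = IZR (Int_part x))
    by now rewrite INR_IZR_INZ, Z2Nat.id.
  split.
  - apply INR_le. rewrite Hi, INR_pow2. lra.
  - rewrite Hi. replace (IZR (Int_part x) * h - t) with (h * (IZR (Int_part x) - x))
      by (unfold x; field; lra).
    rewrite Rabs_mult, (Rabs_right h) by lra. rewrite <- (Rmult_1_r h) at 2.
    apply Rmult_le_compat_l; [lra|]. apply Rabs_le. lra.
Qed.

Section DyadicSubdivision.

Variable X : MetricSpace.
Variable mid : X -> X -> X.
Hypothesis Hmid : forall x y, dist x (mid x y) = dist x y / 2 /\ dist (mid x y) y = dist x y / 2.
Variables p q : X.

Lemma dyadic_dist n :
  dyadic mid p q n 0 = p /\ dyadic mid p q n (2 ^ n) = q /\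
  forall i j, (i <= j <= 2 ^ n)%nat ->
    dist (dyadic mid p q n i) (dyadic mid p q n j) = (INR j - INR i) * (dist p q / 2 ^ n).
Proof.
  induction n as [|n [IH0 [IH1 IH2]]].
  - do 2 (split; [reflexivity|]). intros i j Hij. simpl in Hij.
    destruct i as [|[|i]]; destruct j as [|[|j]]; try lia; simpl; rewrite ?dist_refl; lra.
  - assert (E0 : dyadic mid p q (S n) 0 = p) by exact (eq_trans (dyadic_even mid p q n 0) IH0).
    assert (E1 : dyadic mid p q (S n) (2 ^ S n) = q)
      by (rewrite Nat.pow_succ_r', dyadic_even; exact IH1).
    split; [exact E0|]. split; [exact E1|].
    assert (Hpow : 2 ^ n <> 0) by (apply pow_nonzero; lra).
    apply dist_chain_eq.
    + intros i Hi. pose proof (Nat.div2_odd i) as Hdiv.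
      set (k := Nat.div2 i) in *. rewrite Nat.pow_succ_r' in Hi.
      destruct (Nat.odd i); simpl Nat.b2n in Hdiv.
      * replace (S i) with (2 * S k)%nat by lia.
        rewrite Hdiv, dyadic_odd, dyadic_even, (proj2 (Hmid _ _)), IH2 by lia.
        rewrite S_INR. simpl pow. right. field. exact Hpow.
      * replace (S i) with (2 * k + 1)%nat by lia.
        rewrite Hdiv, Nat.add_0_r, dyadic_odd, dyadic_even, (proj1 (Hmid _ _)), IH2 by lia.
        rewrite S_INR. simpl pow. right. field. exact Hpow.
    + rewrite E0, E1, INR_pow2. simpl pow. right. field. exact Hpow.
Qed.

Lemma dyadic_dist_abs n i j :
  (i <= 2 ^ n)%nat -> (j <= 2 ^ n)%nat ->
  dist (dyadic mid p q n i) (dyadic mid p q n j) =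
    Rabs (INR i * (dist p q / 2 ^ n) - INR j * (dist p q / 2 ^ n)).
Proof.
  intros Hi Hj.
  assert (Hh : 0 <= dist p q / 2 ^ n)
    by (apply Rmult_le_pos; [apply dist_nonneg|left; apply Rinv_0_lt_compat, pow_lt; lra]).
  rewrite <- Rmult_minus_distr_r, Rabs_mult, (Rabs_right (dist p q / 2 ^ n)) by lra.
  destruct (Compare_dec.le_lt_dec i j) as [Hij|Hji].
  - rewrite (proj2 (proj2 (dyadic_dist n))) by lia.
    apply le_INR in Hij. rewrite Rabs_minus_sym, Rabs_right; lra.
  - rewrite dist_sym, (proj2 (proj2 (dyadic_dist n))) by lia.
    apply lt_INR in Hji. rewrite Rabs_right; lra.
Qed.

Lemma dyadic_close t n m i j :
  (n <= m)%nat -> (i <= 2 ^ n)%nat -> (j <= 2 ^ m)%nat ->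
  Rabs (INR i * (dist p q / 2 ^ n) - t) <= dist p q / 2 ^ n ->
  Rabs (INR j * (dist p q / 2 ^ m) - t) <= dist p q / 2 ^ m ->
  dist (dyadic mid p q n i) (dyadic mid p q m j) <= dist p q / 2 ^ n + dist p q / 2 ^ m.
Proof.
  intros Hnm Hi Hj Hit Hjt.
  rewrite <- (dyadic_refine mid p q (m - n) n i). replace (m - n + n)%nat with m by lia.
  assert (Hpow : 2 ^ m = 2 ^ (m - n) * 2 ^ n) by (rewrite <- pow_add; f_equal; lia).
  assert (Hnat : (2 ^ m = 2 ^ n * 2 ^ (m - n))%nat)
    by (rewrite <- Nat.pow_add_r; f_equal; lia).
  rewrite dyadic_dist_abs by (try rewrite Hnat; try apply Nat.mul_le_mono_r; lia).
  replace (INR (i * 2 ^ (m - n)) * (dist p q / 2 ^ m)) with (INR i * (dist p q / 2 ^ n)).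
  - clear -Hit Hjt. split_Rabs; lra.
  - rewrite mult_INR, INR_pow2, Hpow. field. split; apply pow_nonzero; lra.
Qed.

End DyadicSubdivision.

Section Geodesics.

Variable X : MetricSpace.
Hypothesis HS2 : homeomorphic_to_S2 X.
Hypothesis Hintr : intrinsic X.

Lemma dyadic_limit_point (mid : X -> X -> X) (p q : X) (t : R) :
  (forall x y, dist x (mid x y) = dist x y / 2 /\ dist (mid x y) y = dist x y / 2) ->
  0 < dist p q -> 0 <= t <= dist p q ->
  exists z, forall n i, (i <= 2 ^ n)%nat ->
    Rabs (INR i * (dist p q / 2 ^ n) - t) <= dist p q / 2 ^ n ->
    dist (dyadic mid p q n i) z <= dist p q / 2 ^ n.
Proof.
  intros Hmid HD Ht. set (h n := dist p q / 2 ^ n).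
  destruct (choice (fun n i => (i <= 2 ^ n)%nat /\ Rabs (INR i * h n - t) <= h n))
    as [idx Hidx]; [intros n; now apply dyadic_index_exists|].
  destruct (seq_cluster_point X HS2 (fun n => dyadic mid p q n (idx n))) as [z Hz].
  exists z. intros n i Hi Hit. apply Rnot_lt_le. intros Hlt.
  set (e := dist (dyadic mid p q n i) z - h n).
  destruct (div_pow2_eventually_lt (dist p q) (e / 2)) as [N HN];
    [lra|unfold e, h in *; lra|].
  destruct (Hz (e / 2) ltac:(unfold e, h in *; lra) (max N n)) as [k [Hk Hkz]].
  assert (Hclose : dist (dyadic mid p q n i) (dyadic mid p q k (idx k)) <= h n + h k)
    by (apply dyadic_close with t; try lia; apply Hidx || assumption).
  pose proof (HN k ltac:(lia)).
  pose proof (dist_tri X (dyadic mid p q n i) (dyadic mid p q k (idx k)) z).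
  unfold e, h in *. lra.
Qed.

Lemma geodesic_exists (p q : X) :
  exists g : R -> X, g 0 = p /\ g (dist p q) = q /\ geodesic g (dist p q).
Proof.
  destruct (classic (p = q)) as [<-|Hpq].
  { exists (fun _ => p). rewrite dist_refl. do 2 (split; [reflexivity|]).
    intros a b Ha Hb. replace a with 0 by lra. replace b with 0 by lra.
    rewrite dist_refl, Rminus_0_r, Rabs_R0. reflexivity. }
  destruct (midpoint_function_exists X HS2 Hintr) as [mid Hmid].
  set (D := dist p q). set (h n := D / 2 ^ n).
  assert (HD : 0 < D) by now apply dist_pos.
  assert (Hh : forall n, 0 < h n) by (intros n; apply Rdiv_lt_0_compat, pow_lt; lra).
  destruct (choice (fun t z => 0 <= t <= D -> forall n i, (i <= 2 ^ n)%nat ->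
                     Rabs (INR i * h n - t) <= h n -> dist (dyadic mid p q n i) z <= h n))
    as [g Hg].
  { intros t. destruct (classic (0 <= t <= D)) as [Ht|Ht].
    - destruct (dyadic_limit_point mid p q t Hmid HD Ht) as [z Hz]. now exists z.
    - exists p. intros Ht'. contradiction. }
  pose proof (fun n => dyadic_dist X mid Hmid p q n) as Hdy.
  exists g. split; [|split].
  - apply dist_sep, (eq_0_of_le_div_pow2 D); [lra|]. intros n.
    destruct (Hdy n) as [H0 _]. rewrite Rabs_right by apply Rle_ge, dist_nonneg.
    rewrite <- H0, dist_sym. apply Hg; [lra|lia|].
    rewrite Rmult_0_l, Rminus_0_r, Rabs_R0. now left.
  - apply dist_sep, (eq_0_of_le_div_pow2 D); [lra|]. intros n.
    destruct (Hdy n) as [_ [H1 _]]. rewrite Rabs_right by apply Rle_ge, dist_nonneg.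
    rewrite <- H1 at 1. rewrite dist_sym. apply Hg; [lra|lia|].
    rewrite INR_pow2. replace (2 ^ n * h n - D) with 0 by (unfold h; field; apply pow_nonzero; lra).
    rewrite Rabs_R0. now left.
  - intros a b Ha Hb. apply Rminus_diag_uniq, (eq_0_of_le_div_pow2 (4 * D)); [lra|].
    intros n.
    destruct (dyadic_index_exists D a n HD Ha) as [ia [Hia Hiat]].
    destruct (dyadic_index_exists D b n HD Hb) as [ib [Hib Hibt]].
    replace (4 * D / 2 ^ n) with (4 * h n) by (unfold h; field; apply pow_nonzero; lra).
    apply (dist_approx_param X _ _ (dyadic mid p q n ia) (dyadic mid p q n ib)
             _ _ (INR ia * h n) (INR ib * h n)); auto.
    exact (dyadic_dist_abs X mid Hmid p q n ia ib Hia Hib).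
Qed.

End Geodesics.

Lemma geodesic_restrict (X : MetricSpace) (g : R -> X) (L m : R) :
  geodesic g L -> m <= L -> geodesic g m.
Proof. intros H Hm a b Ha Hb. apply H; lra. Qed.

Lemma geodesic_injective (X : MetricSpace) (g : R -> X) (L a b : R) :
  geodesic g L -> 0 <= a <= L -> 0 <= b <= L -> g a = g b -> a = b.
Proof.
  intros Hg Ha Hb E. pose proof (Hg a b Ha Hb) as Hd. rewrite E, dist_refl in Hd.
  destruct (Req_dec a b) as [|Hne]; [assumption|].
  pose proof (Rabs_pos_lt (a - b) ltac:(lra)). lra.
Qed.

Lemma geodesic_glue (X : MetricSpace) (gb gc : R -> X) (Lb Lc t : R) :
  geodesic gb Lb -> geodesic gc Lc -> gb 0 = gc 0 -> gb t = gc t ->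
  0 <= t -> t <= Lb -> t <= Lc ->
  geodesic (fun s => if Rle_dec s t then gb s else gc s) Lc.
Proof.
  intros Hb Hc H0 Ht Ht0 Htb Htc.
  assert (Hmixed : forall a b, 0 <= a <= t -> t < b <= Lc -> dist (gb a) (gc b) = Rabs (a - b)).
  { intros a b Ha Hb'. rewrite Rabs_left by lra. apply Rle_antisym.
    - pose proof (dist_tri X (gb a) (gb t) (gc b)) as Htri.
      rewrite Hb, Ht, Hc, (Rabs_left1 (a - t)), (Rabs_left1 (t - b)) in Htri by lra. lra.
    - pose proof (dist_tri X (gb 0) (gb a) (gc b)) as Htri.
      rewrite Hb, H0, Hc, (Rabs_left1 (0 - a)), (Rabs_left1 (0 - b)) in Htri by lra. lra. }
  intros a b Ha Hb'.
  destruct (Rle_dec a t); destruct (Rle_dec b t).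
  - apply Hb; lra.
  - apply Hmixed; lra.
  - rewrite dist_sym, Rabs_minus_sym. apply Hmixed; lra.
  - apply Hc; lra.
Qed.

Lemma geodesics_agree_at_limit (X : MetricSpace) (g1 g2 : R -> X) (L m : R) :
  geodesic g1 L -> geodesic g2 L -> 0 < m <= L ->
  (forall u, 0 <= u < m -> g1 u = g2 u) -> g1 m = g2 m.
Proof.
  intros H1 H2 Hm Hagree. apply dist_sep, Rle_antisym; [|apply dist_nonneg].
  apply Rnot_lt_le. intros Hd. set (d := dist (g1 m) (g2 m)) in *.
  set (del := Rmin m (d / 4)).
  assert (Hdel : 0 < del /\ del <= m /\ del <= d / 4)
    by (unfold del; apply Rmin_case_strong; intros; lra).
  assert (Q1 : dist (g1 m) (g1 (m - del)) = del)
    by (rewrite H1 by lra; replace (m - (m - del)) with del by ring; apply Rabs_right; lra).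
  assert (Q2 : dist (g2 (m - del)) (g2 m) = del)
    by (rewrite H2 by lra; replace (m - del - m) with (- del) by ring;
        rewrite Rabs_Ropp; apply Rabs_right; lra).
  pose proof (dist_tri X (g1 m) (g1 (m - del)) (g2 m)) as Htri.
  rewrite (Hagree (m - del)) in Htri, Q1 by lra. fold d in Htri. lra.
Qed.

Lemma angsep_bounds (alpha t1 t2 : R) : 0 < alpha -> 0 <= angsep alpha t1 t2 <= alpha / 2.
Proof.
  intros Ha. unfold angsep. set (d := t1 - t2).
  destruct (base_Int_part (d / alpha)) as [B1 B2].
  set (k := IZR (Int_part (d / alpha))) in *.
  assert (alpha * k <= d).
  { apply Rmult_le_compat_l with (r := alpha) in B1; [|lra].
    replace (alpha * (d / alpha)) with d in B1 by (field; lra). exact B1. }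
  assert (d - alpha < alpha * k).
  { assert (Hk : d / alpha - 1 < k) by lra.
    apply Rmult_lt_compat_l with (r := alpha) in Hk; [|lra].
    replace (alpha * (d / alpha - 1)) with (d - alpha) in Hk by (field; lra). exact Hk. }
  apply Rmin_case_strong; intros; lra.
Qed.

Lemma cone_dist_apex (alpha t r t' : R) : 0 <= r -> cone_dist alpha (0, t) (r, t') = r.
Proof.
  intros Hr. unfold cone_dist. simpl fst; simpl snd. destruct (Rlt_dec _ PI); [|lra].
  replace (0 ^ 2 + r ^ 2 - 2 * 0 * r * cos (angsep alpha t t')) with (r * r) by ring.
  now apply sqrt_square.
Qed.

(* The total angle being less than [2 PI], the angle between two rays is less than [PI]. *)
Lemma cone_dist_lt_double_radius (alpha s t1 t2 : R) :
  0 < alpha < 2 * PI -> 0 < s -> cone_dist alpha (s, t1) (s, t2) < 2 * s.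
Proof.
  intros Ha Hs. unfold cone_dist. simpl fst; simpl snd.
  destruct (angsep_bounds alpha t1 t2 (proj1 Ha)) as [A1 A2].
  set (phi := angsep alpha t1 t2) in *.
  destruct (Rlt_dec phi PI) as [Hlt|]; [|lra].
  assert (Hcos : -1 < cos phi) by (rewrite <- cos_PI; apply cos_decreasing_1; lra).
  pose proof (COS_bound phi).
  apply Rlt_le_trans with (sqrt ((2 * s) * (2 * s))); [|rewrite sqrt_square; lra].
  assert (0 < s * s) by nra.
  assert (0 <= s * s * (1 - cos phi)) by (apply Rmult_le_pos; lra).
  assert (0 < s * s * (1 + cos phi)) by (apply Rmult_lt_0_compat; lra).
  apply sqrt_lt_1_alt. split; nra.
Qed.

Lemma plane_midpoint_reflection (A Y B : R * R) (k : R) :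
  dist2 Y A = k -> dist2 Y B = k -> dist2 A B = 2 * k ->
  B = (2 * fst Y - fst A, 2 * snd Y - snd A).
Proof.
  destruct A as [a1 a2], Y as [y1 y2], B as [b1 b2]. unfold dist2; simpl fst; simpl snd.
  intros H1 H2 H3.
  assert (Hsq : forall x y, sqrt (x ^ 2 + y ^ 2) ^ 2 = x ^ 2 + y ^ 2)
    by (intros; apply pow2_sqrt, Rplus_le_le_0_compat; apply pow2_ge_0).
  pose proof (Hsq (y1 - a1) (y2 - a2)) as E1. pose proof (Hsq (y1 - b1) (y2 - b2)) as E2.
  pose proof (Hsq (a1 - b1) (a2 - b2)) as E3. rewrite H1 in E1. rewrite H2 in E2. rewrite H3 in E3.
  (* the parallelogram law makes the sum of [A - Y] and [B - Y] vanish *)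
  assert (E : (a1 - y1 + (b1 - y1)) ^ 2 + (a2 - y2 + (b2 - y2)) ^ 2 = 0) by nra.
  pose proof (pow2_ge_0 (a1 - y1 + (b1 - y1))). pose proof (pow2_ge_0 (a2 - y2 + (b2 - y2))).
  f_equal; nra.
Qed.

Section FlatConeSphere.

Variable X : MetricSpace.
Variable C : list X.
Hypothesis HX : flat_cone_sphere X C.

(* At a cone point of angle less than [2 PI] the points at distance [s] before and after
   are less than [2 s] apart, so no geodesic runs through it. *)
Lemma geodesic_interior_not_cone (g : R -> X) (L t : R) :
  geodesic g L -> 0 < t < L -> ~ In (g t) C.
Proof.
  destruct HX as [_ [_ [_ [_ Hcone]]]]. intros Hg Ht Hin.
  destruct (Hcone _ Hin) as [theta [Htheta [eps [f [He [Hf0 [Hfpos [Hfiso _]]]]]]]].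
  set (s := Rmin (eps / 2) (Rmin (t / 2) ((L - t) / 2))).
  assert (Hs : 0 < s /\ s < eps /\ s <= t / 2 /\ s <= (L - t) / 2)
    by (unfold s; repeat apply Rmin_case_strong; intros; lra).
  assert (D1 : dist (g t) (g (t - s)) = s)
    by (rewrite Hg by lra; rewrite Rabs_right; lra).
  assert (D2 : dist (g t) (g (t + s)) = s)
    by (rewrite Hg by lra; rewrite Rabs_left; lra).
  assert (D3 : dist (g (t - s)) (g (t + s)) = 2 * s)
    by (rewrite Hg by lra; rewrite Rabs_left; lra).
  pose proof (Hfiso (g t) (g (t - s)) ltac:(rewrite dist_refl; lra) ltac:(lra)) as E1.
  pose proof (Hfiso (g t) (g (t + s)) ltac:(rewrite dist_refl; lra) ltac:(lra)) as E2.
  pose proof (Hfiso (g (t - s)) (g (t + s)) ltac:(lra) ltac:(lra)) as E3.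
  pose proof (Hfpos (g (t - s)) ltac:(lra)) as P1.
  pose proof (Hfpos (g (t + s)) ltac:(lra)) as P2.
  destruct (f (g t)) as [r0 t0]. simpl in Hf0. subst r0.
  destruct (f (g (t - s))) as [r1 t1]. destruct (f (g (t + s))) as [r2 t2].
  simpl in P1, P2. rewrite cone_dist_apex in E1, E2 by assumption.
  replace r1 with s in E3 by lra. replace r2 with s in E3 by lra.
  pose proof (cone_dist_lt_double_radius (2 * PI - theta) s t1 t2 ltac:(lra) ltac:(lra)). lra.
Qed.

(* At a flat point, the continuation of a geodesic is the reflection of its past
   through that point in a Euclidean chart. *)
Lemma geodesics_agree_beyond (g1 g2 : R -> X) (L m : R) :
  geodesic g1 L -> geodesic g2 L -> 0 < m < L ->
  (forall u, 0 <= u <= m -> g1 u = g2 u) ->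
  exists h, 0 < h /\ forall u, 0 <= u <= m + h -> g1 u = g2 u.
Proof.
  intros H1 H2 Hm Hagree.
  assert (Hflat : ~ In (g1 m) C) by (apply (geodesic_interior_not_cone g1 L); auto).
  destruct HX as [_ [_ [_ [Hloc _]]]].
  destruct (Hloc _ Hflat) as [eps [f [He [Hiso _]]]].
  set (h := Rmin (eps / 2) (Rmin (m / 2) ((L - m) / 2))).
  assert (Hh : 0 < h /\ h < eps /\ h <= m / 2 /\ h <= (L - m) / 2)
    by (unfold h; repeat apply Rmin_case_strong; intros; lra).
  exists h. split; [lra|]. intros u Hu.
  destruct (Rle_dec u m) as [|Hum]; [apply Hagree; lra|].
  set (k := u - m). replace u with (m + k) by (unfold k; ring).
  assert (Hk : 0 < k <= h) by (unfold k; lra).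
  assert (Hreflect : forall g : R -> X, geodesic g L -> g m = g1 m ->
     f (g (m + k)) = (2 * fst (f (g1 m)) - fst (f (g (m - k))),
                      2 * snd (f (g1 m)) - snd (f (g (m - k))))).
  { intros g Hg Hgm.
    assert (Hnear : forall v, m - k <= v <= m + k -> dist (g1 m) (g v) < eps)
      by (intros v Hv; rewrite <- Hgm, Hg by lra; apply Rabs_def1; lra).
    assert (Hd : forall a b, m - k <= a <= m + k -> m - k <= b <= m + k ->
                 dist2 (f (g a)) (f (g b)) = Rabs (a - b))
      by (intros a b Ha Hb; rewrite Hiso, Hg by (try apply Hnear; lra); reflexivity).
    rewrite <- Hgm. apply plane_midpoint_reflection with k; rewrite Hd by lra;
      [rewrite Rabs_right|rewrite Rabs_left|rewrite Rabs_left]; lra. }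
  apply dist_sep. rewrite <- Hiso.
  - rewrite (Hreflect g1 H1 eq_refl), (Hreflect g2 H2 (eq_sym (Hagree m ltac:(lra)))),
      (Hagree (m - k)) by lra.
    unfold dist2. rewrite !Rminus_diag. rewrite pow_i, Rplus_0_r by lia. apply sqrt_0.
  - rewrite H1 by lra. rewrite Rabs_left; lra.
  - rewrite (Hagree m), H2 by lra. rewrite Rabs_left; lra.
Qed.

Lemma geodesic_nonbranching (g1 g2 : R -> X) (L t : R) :
  geodesic g1 L -> geodesic g2 L -> 0 < t <= L ->
  (forall u, 0 <= u <= t -> g1 u = g2 u) -> forall u, 0 <= u <= L -> g1 u = g2 u.
Proof.
  intros H1 H2 Ht Hagree.
  set (E s := 0 <= s <= L /\ forall u, 0 <= u <= s -> g1 u = g2 u).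
  destruct (completeness E) as [m [Hub Hlub]];
    [exists L; intros s Hs; apply Hs|exists t; split; [lra|exact Hagree]|].
  assert (Htm : t <= m) by (apply Hub; split; [lra|exact Hagree]).
  assert (HmL : m <= L) by (apply Hlub; intros s Hs; apply Hs).
  assert (Hbelow : forall u, 0 <= u < m -> g1 u = g2 u).
  { intros u Hu. apply NNPP. intros Hne. assert (m <= u); [|lra].
    apply Hlub. intros s [_ Hs]. apply Rnot_lt_le. intros Hus. apply Hne, Hs. lra. }
  assert (Hupto : forall u, 0 <= u <= m -> g1 u = g2 u).
  { intros u Hu. destruct (Req_dec u m) as [->|]; [|apply Hbelow; lra].
    apply (geodesics_agree_at_limit X g1 g2 L); auto; lra. }
  destruct (Req_dec m L) as [<-|HmL']; [exact Hupto|exfalso].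
  destruct (geodesics_agree_beyond g1 g2 L m H1 H2 ltac:(lra) Hupto) as [h [Hh Hbeyond]].
  assert (E (Rmin (m + h) L)) as HE.
  { split; [apply Rmin_case_strong; lra|]. intros u Hu. apply Hbeyond.
    pose proof (Rmin_l (m + h) L). lra. }
  apply Hub in HE. revert HE. apply Rmin_case_strong; lra.
Qed.

(* Two geodesics from [r] meeting at an interior point agree up to there, hence beyond, so
   the shorter one would end at an interior point of the longer one. *)
Lemma geodesics_from_point_disjoint (r b c : X) (gb gc : R -> X) (Lb Lc : R) :
  gb 0 = r -> gb Lb = b -> geodesic gb Lb ->
  gc 0 = r -> gc Lc = c -> geodesic gc Lc ->
  In b C -> In c C -> b <> c ->
  forall x y, 0 < x < Lb -> 0 < y < Lc -> gb x <> gc y.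
Proof.
  intros Hb0 HbL Hb Hc0 HcL Hc Inb Inc Hbc x y Hx Hy Hxy.
  assert (Ex : dist r (gb x) = x) by (rewrite <- Hb0, Hb by lra; rewrite Rabs_left; lra).
  assert (Ey : dist r (gc y) = y) by (rewrite <- Hc0, Hc by lra; rewrite Rabs_left; lra).
  rewrite Hxy in Ex. replace y with x in * by lra. clear Ey.
  set (eta s := if Rle_dec s x then gb s else gc s).
  assert (Heta : geodesic eta Lc)
    by (apply geodesic_glue with Lb; auto; try lra; congruence).
  set (m := Rmin Lb Lc).
  assert (Hm : m <= Lb /\ m <= Lc /\ x < m) by (unfold m; apply Rmin_case_strong; intros; lra).
  assert (Hagree : forall u, x < u <= m -> gb u = gc u).
  { intros u Hu.
    assert (Hgb_eta : gb u = eta u).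
    { apply (geodesic_nonbranching gb eta m x); try lra.
      - now apply geodesic_restrict with Lb.
      - now apply geodesic_restrict with Lc.
      - intros v Hv. unfold eta. destruct (Rle_dec v x); [reflexivity|lra]. }
    rewrite Hgb_eta. unfold eta. destruct (Rle_dec u x); [lra|reflexivity]. }
  destruct (Rlt_le_dec Lb Lc) as [Hlt|Hle]; [|destruct (Rlt_le_dec Lc Lb) as [Hlt'|Hle']].
  - apply (geodesic_interior_not_cone gc Lc Lb Hc ltac:(lra)).
    rewrite <- Hagree by (unfold m; rewrite Rmin_left; lra). now rewrite HbL.
  - apply (geodesic_interior_not_cone gb Lb Lc Hb ltac:(lra)).
    rewrite Hagree by (unfold m; rewrite Rmin_right; lra). now rewrite HcL.
  - apply Hbc. rewrite <- HbL, <- HcL. replace Lc with Lb by lra.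
    apply Hagree. unfold m. rewrite Rmin_left; lra.
Qed.

End FlatConeSphere.

Lemma nth_error_map_inv {A B : Type} (f : A -> B) (l : list A) (i : nat) (y : B) :
  nth_error (map f l) i = Some y -> exists x, nth_error l i = Some x /\ y = f x.
Proof.
  rewrite nth_error_map. destruct (nth_error l i) as [x|]; simpl; intros H; inversion H.
  now exists x.
Qed.

Lemma NoDup_nth_error_inj {A : Type} (l : list A) (i j : nat) (x : A) :
  NoDup l -> nth_error l i = Some x -> nth_error l j = Some x -> i = j.
Proof.
  intros Hl Hi Hj. apply (proj1 (NoDup_nth_error l) Hl); [|congruence].
  apply nth_error_Some. congruence.
Qed.

Lemma trail_app {X : Type} (E : list (Seg X)) (u w v : X) (es1 es2 : list nat) :
  trail E u w es1 -> trail E w v es2 -> trail E u v (es1 ++ es2).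
Proof.
  revert u. induction es1 as [|i es IH]; intros u H1 H2; simpl in *; [now subst|].
  destruct H1 as [s [w' [Hs [Hst Htr]]]]. exists s, w'. auto.
Qed.

Section Star.

Context {X : Type}.
Variable r : X.
Variable L : list X.
Variable sg : X -> Seg X.
Hypothesis Hends : forall b, In b L -> spath (sg b) 0 = r /\ spath (sg b) (slen (sg b)) = b.

Lemma star_step (i : nat) (s : Seg X) (w w' : X) :
  nth_error (map sg L) i = Some s ->
  ((spath s 0 = w /\ spath s (slen s) = w') \/ (spath s 0 = w' /\ spath s (slen s) = w)) ->
  w <> r -> nth_error L i = Some w /\ w' = r.
Proof.
  intros Hs Hst Hw. destruct (nth_error_map_inv sg L i s Hs) as [b [Hb ->]].
  destruct (Hends b (nth_error_In _ _ Hb)) as [E0 E1].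
  destruct Hst as [[A1 A2]|[A1 A2]]; [congruence|split; congruence].
Qed.

Lemma star_trail_visits (es : list nat) (w v : X) :
  trail (map sg L) w v es -> w <> v -> v <> r -> exists j, In j es /\ nth_error L j = Some v.
Proof.
  revert w. induction es as [|i es IH]; intros w Htr Hwv Hv; [contradiction|].
  destruct Htr as [s [w' [Hs [Hst Htr]]]].
  destruct (classic (w' = v)) as [->|Hne].
  - exists i. split; [now left|]. apply (star_step i s v w Hs); [|assumption].
    destruct Hst; auto.
  - destruct (IH w' Htr Hne Hv) as [j [Hj1 Hj2]]. exists j. split; [now right|exact Hj2].
Qed.

Hypothesis Hroot : ~ In r L.
Hypothesis HL : NoDup L.

(* Every edge of the star has [r] as an end, so a closed trail must use the edge of the
   vertex it leaves [r] towards twice. *)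
Lemma star_acyclic (u : X) (es : list nat) :
  es <> nil -> NoDup es -> ~ trail (map sg L) u u es.
Proof.
  intros Hne Hnd Htr. destruct es as [|i es']; [contradiction|].
  inversion Hnd as [|? ? Hi Hnd']. subst.
  destruct Htr as [s [w [Hs [Hst Htr]]]].
  destruct (classic (u = r)) as [->|Hur].
  - destruct (nth_error_map_inv sg L i s Hs) as [b [Hb ->]].
    pose proof (nth_error_In _ _ Hb) as Hbin. destruct (Hends b Hbin) as [E0 E1].
    assert (Hw : w = b).
    { destruct Hst as [[A1 A2]|[A1 A2]]; [congruence|]. exfalso. apply Hroot. congruence. }
    subst w. assert (Hbr : b <> r) by (intros ->; contradiction).
    destruct es' as [|j es'']; [simpl in Htr; congruence|].
    destruct Htr as [s' [w' [Hs' [Hst' _]]]].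
    destruct (star_step j s' b w' Hs' Hst' Hbr) as [Hj _].
    assert (i = j) by now apply (NoDup_nth_error_inj L i j b). subst. apply Hi. now left.
  - destruct (star_step i s u w Hs Hst Hur) as [Hiu ->].
    destruct (star_trail_visits es' r u Htr (not_eq_sym Hur) Hur) as [j [Hj1 Hj2]].
    assert (i = j) by now apply (NoDup_nth_error_inj L i j u). subst. contradiction.
Qed.

Lemma star_trails_root (u : X) :
  In u (r :: L) -> exists es, trail (map sg L) u r es /\ trail (map sg L) r u (rev es).
Proof.
  intros [<-|Hu]; [now exists nil|].
  destruct (In_nth_error _ _ Hu) as [i Hi]. exists (i :: nil).
  destruct (Hends u Hu) as [E0 E1].
  assert (Hs : nth_error (map sg L) i = Some (sg u)) by (rewrite nth_error_map, Hi; reflexivity).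
  split; simpl; exists (sg u); [exists r|exists u]; auto.
Qed.

Lemma star_connected (u v : X) :
  In u (r :: L) -> In v (r :: L) -> exists es, trail (map sg L) u v es.
Proof.
  intros Hu Hv.
  destruct (star_trails_root u Hu) as [es1 [H1 _]].
  destruct (star_trails_root v Hv) as [es2 [_ H2]].
  exists (es1 ++ rev es2). exact (trail_app _ u r v es1 (rev es2) H1 H2).
Qed.

End Star.

Lemma embedded_spanning_tree_nil (X : MetricSpace) : embedded_spanning_tree X nil nil.
Proof.
  split; [|split; [|split]].
  - intros s [].
  - intros u v [].
  - intros u [|i es] Hne _ Htr; [contradiction|].
    destruct Htr as [s [w [Hs _]]]. destruct i; discriminate.
  - intros i j si sj _ Hi. destruct i; discriminate.
Qed.

Lemma geodesic_straight_segment (X : MetricSpace) (C : list X) (g : R -> X) (L : R) :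
  flat_cone_sphere X C -> geodesic g L -> 0 < L -> In (g 0) C -> In (g L) C ->
  straight_segment X C (mkSeg X L g).
Proof.
  intros HX Hg HL H0 H1. repeat split; simpl; auto.
  - intros t Ht. exact (geodesic_interior_not_cone X C HX g L t Hg Ht).
  - intros t1 t2 Ht1 Ht2. exact (geodesic_injective X g L t1 t2 Hg Ht1 Ht2).
  - intros t _. exists 1. split; [lra|]. intros a b Ha Hb _ _. now apply Hg.
Qed.

Lemma geodesic_star_spanning_tree (X : MetricSpace) (r : X) (L : list X) (geo : X -> R -> X) :
  flat_cone_sphere X (r :: L) ->
  (forall b, geo b 0 = r /\ geo b (dist r b) = b /\ geodesic (geo b) (dist r b)) ->
  embedded_spanning_tree X (r :: L) (map (fun b => mkSeg X (dist r b) (geo b)) L).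
Proof.
  intros HX Hgeo. pose proof HX as [_ [_ [Hnd _]]].
  inversion Hnd as [|? ? Hroot HL]. subst.
  set (sg b := mkSeg X (dist r b) (geo b)).
  assert (Hends : forall b, In b L -> spath (sg b) 0 = r /\ spath (sg b) (slen (sg b)) = b)
    by (intros b _; simpl; split; apply Hgeo).
  assert (Hrb : forall b, In b L -> r <> b) by (intros b Hb ->; contradiction).
  split; [|split; [|split]].
  - intros s Hs. apply in_map_iff in Hs. destruct Hs as [b [<- Hb]].
    destruct (Hgeo b) as [H0 [H1 Hg]].
    apply geodesic_straight_segment; auto; [now apply dist_pos, Hrb|rewrite H0; now left|].
    rewrite H1. now right.
  - exact (star_connected r L sg Hends).
  - exact (star_acyclic r L sg Hends Hroot HL).
  - intros i j si sj Hij Hsi Hsj a b Ha Hb.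
    destruct (nth_error_map_inv sg L i si Hsi) as [bi [Hbi ->]].
    destruct (nth_error_map_inv sg L j sj Hsj) as [bj [Hbj ->]].
    assert (Hne : bi <> bj) by (intros <-; apply Hij; now apply (NoDup_nth_error_inj L i j bi)).
    destruct (Hgeo bi) as [A1 [B1 I1]]. destruct (Hgeo bj) as [A2 [B2 I2]].
    apply (geodesics_from_point_disjoint X (r :: L) HX r bi bj (geo bi) (geo bj)
             (dist r bi) (dist r bj)); auto; right; eapply nth_error_In; eassumption.
Qed.

Theorem lemma2p1 (X : MetricSpace) (C : list X) :
  flat_cone_sphere X C -> exists E : list (Seg X), embedded_spanning_tree X C E.
Proof.
  intros HX. destruct C as [|r L]; [exists nil; apply embedded_spanning_tree_nil|].
  pose proof HX as [HS2 [Hintr _]].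
  destruct (choice (fun b g => g 0 = r /\ g (dist r b) = b /\ geodesic g (dist r b)))
    as [geo Hgeo]; [intros b; now apply geodesic_exists|].
  eexists. now apply geodesic_star_spanning_tree.
Qed.
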